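(* Let $n\ge2$ and $q\ge1$ be integers, and for $\theta=(\theta_1,\dots,\theta_{n-1})\in\mathbb{R}^{n-1}$ let $$\Phi(\theta)=\binom n2^{-1}\Big(\sum_{j=1}^{n-1}\cos\theta_j+\sum_{j=2}^{n-1}\sum_{k=1}^{j-1}\cos(\theta_j-\theta_k)\Big).$$ Then for every $\theta\in[-\pi,\pi]^{n-1}$ with $\|\theta\|_\infty>1/\sqrt q$, $$\Phi(\theta)\le1-\frac1{25nq}.$$
   Context: $\Phi$ is the characteristic function of one increment of the $1\times n$ Diaconis–Gangolli walk, restricted to the first $n-1$ coordinates. *)

From Stdlib Require Import Reals Lra Lia List.
Open Scope R_scope.

(* Finite sum over the integers a, a+1, ..., b (empty if b < a). *)
Definition sum_range (a b : nat) (f : nat -> R) : R :=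
  fold_right Rplus 0 (map f (seq a (S b - a))).

(* theta : nat -> R, only the coordinates theta 1, ..., theta (n-1) matter. *)
Definition Phi (n : nat) (theta : nat -> R) : R :=
  / (INR (n * (n - 1) / 2)) *
  ( sum_range 1 (n - 1) (fun j => cos (theta j))
  + sum_range 2 (n - 1) (fun j =>
      sum_range 1 (j - 1) (fun k => cos (theta j - theta k)))).

Definition sup_norm_gt (n : nat) (theta : nat -> R) (c : R) : Prop :=
  exists j, (1 <= j <= n - 1)%nat /\ c < Rabs (theta j).

(** Write [a k = 1 - cos θ_k] and [b j k = 1 - cos (θ_j - θ_k)], so that
    [1 - Φ(θ)] is [binom n 2]^-1 times the deficit [Σ_k a k + Σ_{k<j} b j k].
    The chord inequality [1 - cos (x + y) <= 2 ((1 - cos x) + (1 - cos y))]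
    gives [a j0 <= 2 (a k + b j0 k)] for every [k]; summing over [k] shows that
    the deficit is at least [(n - 1) a j0 / 4].  If [|θ_j0| > 1/√q], comparing
    with the Taylor bound [cos t <= 1 - t²/2 + t⁴/24] at [t = 1/√q] yields
    [a j0 >= 11/(24 q)], and [11/48 > 1/25]. *)

From Stdlib Require Import Reals Lra Lia List.
Open Scope R_scope.

Lemma sum_range_ext a b f g :
  (forall k, (a <= k <= b)%nat -> f k = g k) ->
  sum_range a b f = sum_range a b g.
Proof.
  intros Hfg; unfold sum_range.
  assert (Hin : forall k, In k (seq a (S b - a)) -> f k = g k).
  { intros k Hk; apply in_seq in Hk; apply Hfg; lia. }
  induction (seq a (S b - a)) as [|x l IH]; simpl; [reflexivity|].
  rewrite (Hin x) by (simpl; auto).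
  rewrite IH by (intros; apply Hin; simpl; auto); reflexivity.
Qed.

Lemma sum_range_le a b f g :
  (forall k, (a <= k <= b)%nat -> f k <= g k) ->
  sum_range a b f <= sum_range a b g.
Proof.
  intros Hfg; unfold sum_range.
  assert (Hin : forall k, In k (seq a (S b - a)) -> f k <= g k).
  { intros k Hk; apply in_seq in Hk; apply Hfg; lia. }
  induction (seq a (S b - a)) as [|x l IH]; simpl; [lra|].
  assert (f x <= g x) by (apply Hin; simpl; auto).
  assert (fold_right Rplus 0 (map f l) <= fold_right Rplus 0 (map g l))
    by (apply IH; intros; apply Hin; simpl; auto).
  lra.
Qed.

Lemma sum_range_plus a b f g :
  sum_range a b (fun k => f k + g k) = sum_range a b f + sum_range a b g.
Proof. unfold sum_range; induction (seq a (S b - a)); simpl; lra. Qed.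

Lemma sum_range_minus a b f g :
  sum_range a b (fun k => f k - g k) = sum_range a b f - sum_range a b g.
Proof. unfold sum_range; induction (seq a (S b - a)); simpl; lra. Qed.

Lemma sum_range_const a b c :
  sum_range a b (fun _ => c) = INR (S b - a) * c.
Proof.
  unfold sum_range; induction (S b - a)%nat as [|m IH] in a |- *; [simpl; lra|].
  rewrite S_INR; simpl; rewrite IH; lra.
Qed.

Lemma sum_range_nonneg a b f :
  (forall k, (a <= k <= b)%nat -> 0 <= f k) -> 0 <= sum_range a b f.
Proof.
  intros Hf; rewrite <- (Rmult_0_r (INR (S b - a))), <- sum_range_const.
  now apply sum_range_le.
Qed.

Lemma sum_range_succ a b f : (a <= S b)%nat ->
  sum_range a (S b) f = sum_range a b f + f (S b).
Proof.
  intros Hab; unfold sum_range.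
  replace (S (S b) - a)%nat with (S (S b - a)) by lia.
  rewrite seq_S, map_app, fold_right_app.
  replace (a + (S b - a))%nat with (S b) by lia.
  cbn [map fold_right]; induction (map f (seq a (S b - a))); simpl; lra.
Qed.

Lemma sum_range_term_le a b f i : (a <= i <= b)%nat ->
  (forall k, (a <= k <= b)%nat -> 0 <= f k) -> f i <= sum_range a b f.
Proof.
  intros Hi Hf; induction b as [|b IH].
  - replace a with 0%nat by lia; replace i with 0%nat by lia.
    unfold sum_range; simpl; lra.
  - rewrite sum_range_succ by lia.
    destruct (Nat.eq_dec i (S b)) as [->|Hne].
    + assert (0 <= sum_range a b f) by (apply sum_range_nonneg; intros; apply Hf; lia).
      lra.
    + assert (0 <= f (S b)) by (apply Hf; lia).
      assert (f i <= sum_range a b f) by (apply IH; [lia|intros; apply Hf; lia]).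
      lra.
Qed.

Lemma sum_range_symmetric_square m (b : nat -> nat -> R) :
  (forall j k, b j k = b k j) ->
  sum_range 1 m (fun j => sum_range 1 m (b j))
  = 2 * sum_range 1 m (fun j => sum_range 1 (j - 1) (b j))
    + sum_range 1 m (fun j => b j j).
Proof.
  intros Hsym; induction m as [|m IH]; [unfold sum_range; simpl; lra|].
  rewrite (sum_range_ext 1 (S m) (fun j => sum_range 1 (S m) (b j))
             (fun j => sum_range 1 m (b j) + b (S m) j))
    by (intros; rewrite sum_range_succ, Hsym by lia; reflexivity).
  rewrite sum_range_plus, !sum_range_succ, IH by lia.
  replace (S m - 1)%nat with m by lia.
  lra.
Qed.

Lemma INR_binom2 n : INR (n * (n - 1) / 2) = INR n * (INR n - 1) / 2.
Proof.
  assert (Heven : exists t, (n * (n - 1) = 2 * t)%nat /\ 2 * INR t = INR n * (INR n - 1)).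
  { induction n as [|n [t [Ht HRt]]]; [exists 0%nat; simpl; split; [lia|lra]|].
    exists (t + n)%nat; split; [destruct n; simpl in *; nia|].
    rewrite plus_INR, S_INR; lra. }
  destruct Heven as [t [Ht HRt]].
  rewrite Ht, Nat.mul_comm, Nat.div_mul by lia; lra.
Qed.

Definition Phi_deficit (m : nat) (theta : nat -> R) : R :=
  sum_range 1 m (fun k => 1 - cos (theta k))
  + sum_range 1 m (fun j => sum_range 1 (j - 1) (fun k => 1 - cos (theta j - theta k))).

Lemma Phi_eq_deficit m theta : (1 <= m)%nat ->
  Phi (S m) theta = 1 - Phi_deficit m theta / (INR (S m) * INR m / 2).
Proof.
  intros Hm; unfold Phi, Phi_deficit.
  rewrite INR_binom2; replace (S m - 1)%nat with m by lia.
  replace (INR (S m) - 1) with (INR m) by (rewrite S_INR; lra).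
  (* the inner sum of the [j = 1] term is empty *)
  assert (Hfirst : forall g : nat -> R, g 1%nat = 0 -> sum_range 2 m g = sum_range 1 m g).
  { intros g Hg; destruct m as [|m]; [lia|].
    induction m as [|m IH]; [unfold sum_range; simpl; lra|].
    rewrite !(sum_range_succ _ (S m)), IH by lia; reflexivity. }
  rewrite Hfirst by reflexivity.
  assert (Htri : sum_range 1 m (fun j => sum_range 1 (j - 1) (fun _ => 1))
                 = INR m * (INR m - 1) / 2).
  { pose proof (sum_range_symmetric_square m (fun _ _ => 1) (fun _ _ => eq_refl)) as Hsq.
    cbv beta in Hsq; rewrite !sum_range_const in Hsq.
    replace (S m - 1)%nat with m in Hsq by lia; lra. }
  rewrite sum_range_minus, sum_range_const, (sum_range_ext 1 m
    (fun j => sum_range 1 (j - 1) (fun k => 1 - cos (theta j - theta k)))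
    (fun j => sum_range 1 (j - 1) (fun _ => 1)
              - sum_range 1 (j - 1) (fun k => cos (theta j - theta k))))
    by (intros; apply sum_range_minus).
  rewrite sum_range_minus, Htri; replace (S m - 1)%nat with m by lia.
  assert (0 < INR m) by (apply lt_0_INR; lia).
  rewrite S_INR; field; lra.
Qed.

Lemma one_minus_cos_add_le x y :
  1 - cos (x + y) <= 2 * ((1 - cos x) + (1 - cos y)).
Proof.
  assert (Hhalf : forall z, 1 - cos z = 2 * sin (z / 2) ^ 2).
  { intros z; replace z with (2 * (z / 2)) at 1 by field; rewrite cos_2a_sin; lra. }
  rewrite !Hhalf; replace ((x + y) / 2) with (x / 2 + y / 2) by field.
  rewrite sin_plus.
  pose proof (sin2_cos2 (x / 2)); pose proof (sin2_cos2 (y / 2)); unfold Rsqr in *.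
  set (s := sin (x / 2)) in *; set (t := sin (y / 2)) in *.
  set (c := cos (x / 2)) in *; set (d := cos (y / 2)) in *.
  (* [(s d + c t)² <= 2 (s² d² + c² t²) <= 2 (s² + t²)] *)
  assert (0 <= (s * d - c * t) ^ 2) by apply pow2_ge_0.
  assert (s * s * (d * d) <= s * s) by nra.
  assert (t * t * (c * c) <= t * t) by nra.
  nra.
Qed.

Lemma one_minus_cos_lower_bound t x : 0 < t <= 1 -> t < Rabs x <= PI ->
  11 / 24 * t ^ 2 <= 1 - cos x.
Proof.
  intros [Ht0 Ht1] Hx.
  assert (Hcos : cos x = cos (Rabs x))
    by (unfold Rabs; destruct Rcase_abs; [rewrite cos_neg|]; reflexivity).
  assert (cos (Rabs x) < cos t)
    by (apply cos_decreasing_1; pose proof PI_RGT_0; pose proof (Rabs_pos x); lra).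
  assert (Htaylor : cos t <= 1 - t ^ 2 / 2 + t ^ 4 / 24).
  { destruct (pre_cos_bound t 0 ltac:(lra) ltac:(lra)) as [_ Hup].
    unfold cos_approx, cos_term in Hup; simpl in Hup; simpl; lra. }
  assert (t ^ 4 <= t ^ 2).
  { replace (t ^ 4) with (t ^ 2 * t ^ 2) by ring.
    assert (0 <= t ^ 2 <= 1) by (simpl; split; nra).
    nra. }
  lra.
Qed.

Lemma one_minus_cos_lower_bound_inv_sqrt (q : nat) x : (1 <= q)%nat ->
  / sqrt (INR q) < Rabs x <= PI -> 11 / 24 <= (1 - cos x) * INR q.
Proof.
  intros Hq Hx.
  assert (HQ : 1 <= INR q) by (apply (le_INR 1); lia).
  assert (Hsq : 1 <= sqrt (INR q)) by (rewrite <- sqrt_1; apply sqrt_le_1_alt; lra).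
  assert (Ht : 0 < / sqrt (INR q) <= 1)
    by (split; [apply Rinv_0_lt_compat; lra|rewrite <- Rinv_1; apply Rinv_le_contravar; lra]).
  pose proof (one_minus_cos_lower_bound _ x Ht Hx) as Hlow.
  rewrite pow_inv, <- Rsqr_pow2, Rsqr_sqrt in Hlow by lra.
  apply (Rmult_le_compat_r (INR q)) in Hlow; [|lra].
  rewrite Rmult_assoc, Rinv_l in Hlow by lra; lra.
Qed.

Lemma Phi_deficit_ge m theta j0 : (1 <= j0 <= m)%nat ->
  INR m * (1 - cos (theta j0)) / 4 <= Phi_deficit m theta.
Proof.
  intros Hj0; unfold Phi_deficit.
  set (a := fun k => 1 - cos (theta k)).
  set (b := fun j k => 1 - cos (theta j - theta k)).
  assert (Ha0 : forall k, 0 <= a k) by (intros; unfold a; pose proof (COS_bound (theta k)); lra).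
  assert (Hb0 : forall j k, 0 <= b j k)
    by (intros; unfold b; pose proof (COS_bound (theta j - theta k)); lra).
  assert (Hchord : INR m * (a j0 / 2) <= sum_range 1 m a + sum_range 1 m (b j0)).
  { replace (INR m) with (INR (S m - 1)) by (f_equal; lia).
    rewrite <- sum_range_const, <- sum_range_plus; apply sum_range_le; intros k _.
    pose proof (one_minus_cos_add_le (theta k) (theta j0 - theta k)) as H.
    replace (theta k + (theta j0 - theta k)) with (theta j0) in H by ring.
    unfold a, b; lra. }
  assert (Hrow : sum_range 1 m (b j0)
                 <= 2 * sum_range 1 m (fun j => sum_range 1 (j - 1) (b j))).
  { assert (Hdiag : sum_range 1 m (fun j => b j j) = 0).
    { rewrite (sum_range_ext 1 m _ (fun _ => 0)), sum_range_const by
        (intros; unfold b; rewrite Rminus_diag, cos_0; ring); ring. }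
    assert (Hsym : forall j k, b j k = b k j).
    { intros j k; unfold b; replace (theta k - theta j) with (- (theta j - theta k)) by ring.
      now rewrite cos_neg. }
    rewrite <- (Rplus_0_r (2 * _)), <- Hdiag, <- sum_range_symmetric_square by exact Hsym.
    apply (sum_range_term_le 1 m (fun j => sum_range 1 m (b j))); [lia|].
    intros; apply sum_range_nonneg; auto. }
  assert (0 <= sum_range 1 m a) by (apply sum_range_nonneg; auto).
  change (INR m * a j0 / 4 <= sum_range 1 m a
            + sum_range 1 m (fun j => sum_range 1 (j - 1) (b j))); lra.
Qed.

Theorem mainTheorem11 (n q : nat) (theta : nat -> R) :
  (2 <= n)%nat -> (1 <= q)%nat ->
  (forall j, (1 <= j <= n - 1)%nat -> - PI <= theta j <= PI) ->
  sup_norm_gt n theta (/ sqrt (INR q)) ->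
  Phi n theta <= 1 - / (25 * INR n * INR q).
Proof.
  intros Hn Hq Hbox [j0 [Hj0 Hbig]].
  destruct n as [|m]; [lia|]; replace (S m - 1)%nat with m in * by lia.
  pose proof (one_minus_cos_lower_bound_inv_sqrt q (theta j0) Hq
                (conj Hbig (Rabs_le _ _ (Hbox j0 Hj0)))) as HaQ.
  pose proof (Phi_deficit_ge m theta j0 Hj0) as HD.
  assert (Hm : 1 <= INR m) by (apply (le_INR 1); lia).
  assert (HQ : 1 <= INR q) by (apply (le_INR 1); lia).
  rewrite Phi_eq_deficit by lia; rewrite S_INR.
  set (D := Phi_deficit m theta) in *; set (a := 1 - cos (theta j0)) in *.
  set (M := INR m) in *; set (Q := INR q) in *.
  (* [D Q >= M a Q / 4 >= 11 M / 96], and the target only needs [D Q >= M / 50] *)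
  assert (HDQ : M / 50 <= D * Q) by nra.
  apply Rplus_le_compat_l, Ropp_le_contravar.
  replace (/ (25 * (M + 1) * Q)) with (M / 50 * / Q / ((M + 1) * M / 2)) by (field; lra).
  unfold Rdiv at 1 3; apply Rmult_le_compat_r; [apply Rlt_le, Rinv_0_lt_compat; nra|].
  replace D with (D * Q * / Q) by (field; lra).
  apply Rmult_le_compat_r; [apply Rlt_le, Rinv_0_lt_compat|]; lra.
Qed.
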